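(* Let $\epsilon>0$, $\epsilon_1=\epsilon/(2+\epsilon)$ and $\epsilon_5=\epsilon_1/(4k-2)$. For $u,v,w\in V\setminus D$, let $P=\pi_{G-D}(u,v)\circ\pi_{G-D}(v,w)$. If $P$ is $\epsilon_1$-far away from $V(H)$, then $P$ is an $\epsilon_5$-segment bipath.
   Context: $G=(V,E)$ is an undirected graph with $n\ge3$ vertices and real edge weights in $[1,W]$; shortest paths in every subgraph are assumed unique; $\pi_{G'}(x,y)$ is the shortest $x$-$y$ path in $G'$, $\delta_{G'}$ its length, $\circ$ path concatenation, $|P|$ weighted length, $P[a,b]$ the subpath between $a,b$, $G-R$ the graph with vertex set $R$ deleted. Let $k=\ln n$. For $R\subseteq V$, $S\subseteq V\setminus R$, an $S$-restricted tree cover of $G-R$ is a family $\{T(w):w\in S\}$ of trees, $T(w)$ a subtree of $G-R$ rooted at $w$, such that (i) for all $u\in S$, $v\in V\setminus R$ there is $w\in S$ with $u,v\in V(T(w))$ and $\mathrm{dep}_{T(w)}(u)+\mathrm{dep}_{T(w)}(v)\le(2k-1)\delta_{G-R}(u,v)$ ($\mathrm{dep}_T(x)$ = weighted distance from $x$ to the root); (ii) each vertex lies in at most $kn^{1/k}(\ln n+1)$ trees. A vertex of such a tree $T$ is a trunk vertex if it lies on the $T$-path between two vertices of $S$; $\mathrm{Trunk}(T)$ is the subtree induced by trunk vertices; $\mathrm{pdeg}_T(v)$ is the degree of $v$ in $\mathrm{Trunk}(T)$ (0 if not trunk). Fix an integer $d\ge2$, a constant $c\ge1$, $s=4e d^{c+1}\ln^2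 n+1$; $\mathrm{Hi}(\mathcal{C})$ is the set of vertices of pseudo-degree $>s$ in some tree of a tree cover $\mathcal{C}$. Fixed tree covers: $\mathcal{T}(S)$ ($S$-restricted, of $G$) and $\mathcal{T}_R(S)$ ($(S\setminus R)$-restricted, of $G-R$), $\mathcal{T}_\varnothing(S)=\mathcal{T}(S)$. Hierarchy tree: root $V$; a node $U$ is a leaf if $\mathrm{Hi}(\mathcal{T}(U))=\varnothing$, else it has children $W_1=\mathrm{Hi}(\mathcal{T}(U))$, $W_i=W_{i-1}\cup\mathrm{Hi}(\mathcal{T}_{W_{i-1}}(U))$ ($2\le i\le d$), recursively. Let $D\subseteq V$, $|D|\le d$, and fix a root-to-node path $V=U_1,\dots,U_p$ in the hierarchy tree, $U_{p+1}=\varnothing$, such that every $f\in D$ has pseudo-degree $\le s$ in every tree of $\mathcal{T}:=\bigcup_{i=1}^p\mathcal{T}_{U_{i+1}}(U_i)$. Level $l(v)$ = largest $l$ with $v\in U_l$; $G_i$ = subgraph induced by vertices of level $\le i$. Let $s_0,t_0\in V\setminus D$ be query vertices; for $f\in D$, $T\in\mathcal{T}$ containing $f$, $N_T(f)=\{\mathrm{parent}_T(f)\}\cup(\mathrm{children}_T(f)\cap\mathrm{Trunk}(T))$, $N(f)=\bigcup_TN_T(f)$, $V(H)=(\{s_0,t_0\}\cup\bigcup_{f\in D}N(f))\setminus D$. A path $P$ from $a$ to $b$ is $\eta$-far away from $V(H)$ if there are no $x\in P\setminus\{a,b\}$, $w\in V(H)$ with $\delta_{G-D}(x,w)\le\eta\min\{|P[a,x]|,|P[x,b]|\}$.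 $\eta$-segments of $P=(a=v_0,\dots,v_\ell=b)$: for $1\le i,j<\ell$, $v_i,v_j$ are in the same segment if either both $|P[a,v_i]|,|P[a,v_j]|\le|P|/2$ with equal $\lfloor\log_{1+\eta}|P[a,\cdot]|\rfloor$, or both $|P[v_i,b]|,|P[v_j,b]|<|P|/2$ with equal $\lfloor\log_{1+\eta}|P[\cdot,b]|\rfloor$; classes are contiguous, $a,b$ in no segment. $P$ is an $\eta$-segment bipath if for every $\eta$-segment $P[x,y]$ there are levels $1\le i,j\le p$ and $z\in P[x,y]$ with $P[x,y]=\pi_{G_i}(x,z)\circ\pi_{G_j}(z,y)$. *)

From HB Require Import structures.
From mathcomp Require Import all_boot all_order all_algebra.
From mathcomp Require Import all_classical all_reals all_analysis.
Set Implicit Arguments. Unset Strict Implicit. Unset Printing Implicit Defensive.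
Import Order.TTheory GRing.Theory Num.Theory.
Local Open Scope ring_scope.

Section Defs.
Variables (R : realType) (V : finType) (e : rel V) (wt : V -> V -> R).

Definition nV : R := (#|V|)%:R.
Definition kk : R := ln nV.

Fixpoint wlen (p : seq V) : R :=
  match p with
  | x :: ((y :: _) as t) => wt x y + wlen t
  | _ => 0
  end.

Definition walk (F : rel V) (X : {set V}) (x y : V) (p : seq V) : Prop :=
  match p with
  | [::] => False
  | x0 :: t => [/\ x0 = x, last x0 t = y, path F x0 t & all (fun z => z \in X) p]
  end.

Definition is_sp (F : rel V) (X : {set V}) (x y : V) (p : seq V) : Prop :=
  walk F X x y p /\ forall q, walk F X x y q -> wlen p <= wlen q.

Definition is_dist (X : {set V}) (x y : V) (d : R) : Prop :=
  (exists p, walk e X x y p /\ wlen p = d) /\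
  (forall p, walk e X x y p -> d <= wlen p).

Record rtree := RTree { troot : V; tverts : {set V}; tpar : V -> V }.

Definition valid_tree (Rm : {set V}) (r : V) (T : rtree) : Prop :=
  [/\ troot T = r, r \in tverts T, tpar T r = r & tverts T \subset ~: Rm] /\
  [/\ (forall x, x \in tverts T -> x != r -> tpar T x \in tverts T /\ e x (tpar T x))
    & (forall x, x \in tverts T -> exists m, iter m (tpar T) x = r)].

Definition dep (T : rtree) (x : V) : R :=
  \sum_(m < #|V|) (if iter m (tpar T) x != troot T
                   then wt (iter m (tpar T) x) (iter m.+1 (tpar T) x) else 0).

Definition anc (T : rtree) (a v : V) : bool :=
  [exists m : 'I_#|V|, iter m (tpar T) a == v].

(* v lies on the T-path between a and b *)
Definition on_tpath (T : rtree) (a b v : V) : bool :=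
  (anc T a v || anc T b v) && [forall c, (anc T a c && anc T b c) ==> anc T v c].

Definition trunk (S : {set V}) (T : rtree) (v : V) : bool :=
  (v \in tverts T) &&
  [exists a, exists b, [&& a \in S, b \in S, a \in tverts T, b \in tverts T
                         & on_tpath T a b v]].

Definition tadj (T : rtree) (x y : V) : bool :=
  [&& x \in tverts T, y \in tverts T &
      ((x != troot T) && (tpar T x == y)) || ((y != troot T) && (tpar T y == x))].

Definition pdeg (S : {set V}) (T : rtree) (v : V) : nat :=
  if trunk S T v then #|[set y | tadj T v y && trunk S T y]| else 0.

Definition NT (S : {set V}) (T : rtree) (f : V) : {set V} :=
  [set y | (f != troot T) && (y == tpar T f)] :|:
  [set y | [&& y \in tverts T, y != troot T, tpar T y == f & trunk S T y]].

Definition tree_cover (Rm S : {set V}) (C : V -> rtree) : Prop :=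
  [/\ S \subset ~: Rm,
      (forall r, r \in S -> valid_tree Rm r (C r)),
      (forall u v, u \in S -> v \in ~: Rm -> (exists p, walk e (~: Rm) u v p) ->
         exists2 r, r \in S &
           [/\ u \in tverts (C r), v \in tverts (C r) &
               forall d, is_dist (~: Rm) u v d ->
                 dep (C r) u + dep (C r) v <= (2 * kk - 1) * d])
    & (forall v, (#|[set r in S | v \in tverts (C r)]|)%:R
                 <= kk * powR nV (kk^-1) * (ln nV + 1))].

Definition s_par (d : nat) (c : R) : R :=
  4 * expR 1 * powR (d%:R) (c + 1) * (ln nV) ^+ 2 + 1.

Definition Hi (s : R) (S : {set V}) (C : V -> rtree) : {set V} :=
  [set v | [exists r in S, s < (pdeg S (C r) v)%:R]].

(* TCR Rm S = the fixed tree cover T_Rm(S), which is (S \ Rm)-restricted;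
   T(S) = TCR finset.set0 S. *)
Definition HiT (s : R) (TCR : {set V} -> {set V} -> V -> rtree) (Rm U : {set V}) :=
  Hi s (U :\: Rm) (TCR Rm U).

(* Wch U i = W_{i+1} *)
Fixpoint Wch (s : R) TCR (U : {set V}) (i : nat) : {set V} :=
  match i with
  | 0 => HiT s TCR finset.set0 U
  | i'.+1 => Wch s TCR U i' :|: HiT s TCR (Wch s TCR U i') U
  end.

Definition hchild (s : R) (d : nat) TCR (U U' : {set V}) : Prop :=
  HiT s TCR finset.set0 U != finset.set0 /\ exists2 i, (i < d)%N & U' = Wch s TCR U i.

Definition hier_path (s : R) (d : nat) TCR (Us : seq {set V}) : Prop :=
  [/\ Us != [::], nth finset.set0 Us 0 = [set: V] &
      forall j, (j.+1 < size Us)%N -> hchild s d TCR (nth finset.set0 Us j) (nth finset.set0 Us j.+1)].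

(* restriction set of the j-th (0-indexed) family T_{U_{j+2}}(U_{j+1}) *)
Definition Sj (Us : seq {set V}) (j : nat) : {set V} :=
  nth finset.set0 Us j :\: nth finset.set0 Us j.+1.
Definition Tj TCR (Us : seq {set V}) (j : nat) : V -> rtree :=
  TCR (nth finset.set0 Us j.+1) (nth finset.set0 Us j).

Definition VH TCR (Us : seq {set V}) (D : {set V}) (s0 t0 : V) : {set V} :=
  ([set s0; t0] :|:
   [set y | [exists f in D, exists j : 'I_(size Us), exists r in Sj Us j,
               (f \in tverts (Tj TCR Us j r)) && (y \in NT (Sj Us j) (Tj TCR Us j r) f)]])
  :\: D.

(* vertex set of G_i: vertices of level <= i (levels 1..p) *)
Definition Gset (Us : seq {set V}) (i : nat) : {set V} :=
  [set v | [forall j : 'I_(size Us), (i <= j)%N ==> (v \notin nth finset.set0 Us j)]].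

Definition lenA (P : seq V) (i : nat) : R := wlen (take i.+1 P).
Definition lenB (P : seq V) (i : nat) : R := wlen (drop i P).
Definition logb (eta x : R) : R := ln x / ln (1 + eta).

Definition far_away (eta : R) (X : {set V}) (D : {set V}) (P : seq V) : Prop :=
  forall x0 : V, forall i, (0 < i)%N -> (i < (size P).-1)%N ->
    nth x0 P i != nth x0 P 0 -> nth x0 P i != last x0 P ->
    forall y, y \in X ->
      ~ exists dd, is_dist (~: D) (nth x0 P i) y dd /\
                   dd <= eta * Num.min (lenA P i) (lenB P i).

Definition same_seg (eta : R) (P : seq V) (i j : nat) : Prop :=
  [/\ (0 < i)%N, (i < (size P).-1)%N, (0 < j)%N, (j < (size P).-1)%N &
     ((lenA P i <= wlen P / 2 /\ lenA P j <= wlen P / 2 /\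
        Num.floor (logb eta (lenA P i)) = Num.floor (logb eta (lenA P j)))
  \/ (lenB P i < wlen P / 2 /\ lenB P j < wlen P / 2 /\
        Num.floor (logb eta (lenB P i)) = Num.floor (logb eta (lenB P j))))].

(* P is an eta-segment bipath (w.r.t. the levels 1..size Us) :
   for every eta-segment P[v_i, v_j] (i = first, j = last position of the class) *)
Definition seg_bipath (eta : R) (Us : seq {set V}) (P : seq V) : Prop :=
  forall x0 : V, forall i j, same_seg eta P i j ->
    (forall m, same_seg eta P i m -> (i <= m <= j)%N) ->
    exists li lj m, [/\ (1 <= li <= size Us)%N, (1 <= lj <= size Us)%N,
      (i <= m <= j)%N &
      exists p1 p2, [/\ is_sp e (Gset Us li) (nth x0 P i) (nth x0 P m) p1,
                        is_sp e (Gset Us lj) (nth x0 P m) (nth x0 P j) p2 &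
                        take (j - i).+1 (drop i P) = p1 ++ behead p2]].

End Defs.

From HB Require Import structures.
From mathcomp Require Import all_boot all_order all_algebra.
From mathcomp Require Import all_classical all_reals all_analysis.
From mathcomp Require Import zify lra.
Import Order.TTheory GRing.Theory Num.Theory.
Local Open Scope ring_scope.
Set Implicit Arguments. Unset Strict Implicit. Unset Printing Implicit Defensive.

(* Split the segment at the vertex where the two shortest paths meet (clamped into
   the segment): each half is then a subpath of [p1] or [p2], hence a shortest path
   [Q] of G - D.  Let l be the least level with Q inside G_l.  If Q were not shortest
   in G_l, a shorter walk of G_l would meet a fault f, and together with Q it yields a
   walk of length < |Q| from a vertex w of Q of level exactly l to f.  The level-l tree
   cover has a tree containing w and f whose depths add up to at most (2k-1)|Q|;
   climbing from w, or descending towards f, in that tree reaches a tree neighbour of a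
   fault, i.e. a vertex of V(H), before touching D.  So every vertex of Q is within
   2k|Q| of V(H) in G - D, whereas |Q| < eps5 L, where L bounds from below the distance
   of the segment to both ends of P; as (4k-2) eps5 = eps1, this contradicts P being
   eps1-far away from V(H). *)

Definition piece (T : Type) (s : seq T) (a b : nat) : seq T := take (b - a).+1 (drop a s).

Lemma size_piece (T : Type) (s : seq T) a b : (a <= b < size s)%N ->
  size (piece s a b) = (b - a).+1.
Proof. by move=> /andP [ab bs]; rewrite size_takel // size_drop; lia. Qed.

Lemma nth_piece (T : Type) (x : T) s a b k : (k <= b - a)%N ->
  nth x (piece s a b) k = nth x s (a + k).
Proof. by move=> kba; rewrite nth_take ?nth_drop. Qed.

Lemma piece_cat (T : Type) (s : seq T) a m b : (a <= m <= b)%N ->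
  piece s a b = piece s a m ++ behead (piece s m b).
Proof.
move=> /andP [am mb]; rewrite /piece.
have -> : drop m s = drop (m - a) (drop a s) by rewrite drop_drop subnK.
set t := drop a s.
have behead_take n (u : seq T) : behead (take n.+1 u) = take n (behead u) by case: u.
rewrite behead_take -drop1 drop_drop add1n -takeD; congr take; lia.
Qed.

Lemma piece_prefix (T : Type) (s : seq T) k : piece s 0%N k = take k.+1 s.
Proof. by rewrite /piece subn0 drop0. Qed.

Lemma piece_suffix (T : Type) (s : seq T) k : (k < size s)%N -> piece s k (size s).-1 = drop k s.
Proof. by move=> ks; rewrite /piece take_oversize // size_drop; lia. Qed.

Lemma piece_cat_l (T : Type) (s t : seq T) a b : (a <= b < size s)%N ->
  piece (s ++ t) a b = piece s a b.
Proof.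
move=> abs; rewrite /piece drop_cat ifT; last by lia.
by rewrite takel_cat // size_drop; lia.
Qed.

Lemma piece_cat_r (T : Type) (s t : seq T) a b : (size s <= a)%N ->
  piece (s ++ t) a b = piece t (a - size s) (b - size s).
Proof.
by move=> sa; rewrite /piece drop_cat ltnNge sa /=; congr (take _ _); lia.
Qed.

Section Walks.
Variables (R : realType) (V : finType) (wt : V -> V -> R).
Implicit Types (F : rel V) (X Y : {set V}) (p q s : seq V).

Lemma walkE F X x y p : walk F X x y p <->
  [/\ p != [::], head x p = x, last x p = y, sorted F p & {subset p <= X}].
Proof.
case: p => [|x0 t] /=; first by split=> // -[].
split=> [[-> <- Ht HX]|[_ -> <- Ht HX]]; split=> //.
  exact: (@allP _ (fun z => z \in X) (x :: t) HX).
exact/(@allP _ (fun z => z \in X) (x :: t)).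
Qed.

Lemma walk_glue F X x y z p q : walk F X x y p -> walk F X y z q ->
  walk F X x z (p ++ behead q).
Proof.
case: p => [|x0 p] //; case: q => [|y0 q] // [-> py Fp Xp] [-> qz Fq Xq] /=.
split=> //; first by rewrite last_cat py.
  by rewrite cat_path Fp py.
by move: Xp Xq => /= /andP [-> Xp] /andP [_ Xq]; rewrite all_cat Xp.
Qed.

Lemma walk_rev F X x y p : symmetric F -> walk F X x y p -> walk F X y x (rev p).
Proof.
move=> Fsym /walkE [p0 px py Fp Xp]; apply/walkE; split.
- by rewrite -size_eq0 size_rev size_eq0.
- by case: p p0 py {px Fp Xp} => // x0 t _ /= <-; rewrite lastI rev_rcons.
- by case: p p0 px {py Fp Xp} => // x0 t _ /= <-; rewrite rev_cons last_rcons.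
- by rewrite rev_sorted (eq_sorted (e' := F)) // => a b; rewrite Fsym.
- by move=> z; rewrite mem_rev; apply: Xp.
Qed.

Lemma walk_ends_in F X x y p : walk F X x y p -> x \in X /\ y \in X.
Proof.
case: p => [|z t] // [-> <- _ Xp]; have := @allP _ (fun z => z \in X) (x :: t) Xp.
by move=> Xs; split; apply: Xs; [exact: mem_head | exact: mem_last].
Qed.

Lemma walk_size_gt0 F X x y p : walk F X x y p -> (0 < size p)%N.
Proof. by case: p. Qed.

Lemma walk_restrict F X Y x y p : walk F X x y p -> {subset p <= Y} -> walk F Y x y p.
Proof. by move=> /walkE [? ? ? ? _] pY; apply/walkE. Qed.

Lemma walk_mono F X Y x y p : {subset X <= Y} -> walk F X x y p -> walk F Y x y p.
Proof. by move=> XY /walkE [? ? ? ? Xp]; apply/walkE; split=> // z /Xp /XY. Qed.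

Lemma walk_piece F X x y s a b : walk F X x y s -> (a <= b < size s)%N ->
  walk F X (nth x s a) (nth x s b) (piece s a b).
Proof.
move=> /walkE [_ _ _ Fs Xs] abs; have sz := size_piece abs.
apply/walkE; split.
- by rewrite -size_eq0 sz.
- by rewrite -nth0 nth_piece // addn0; apply: set_nth_default; lia.
- rewrite -nth_last sz nth_piece // subnKC; last by lia.
  by apply: set_nth_default; lia.
- exact/take_sorted/drop_sorted.
- by move=> z /mem_take /mem_drop /Xs.
Qed.

Lemma wlen_small s : (size s <= 1)%N -> wlen wt s = 0.
Proof. by case: s => [|? []]. Qed.

Lemma wlen_cons2 x y s : wlen wt (x :: y :: s) = wt x y + wlen wt (y :: s).
Proof. by []. Qed.

Lemma wlen_split s t : (t < size s)%N ->
  wlen wt s = wlen wt (take t.+1 s) + wlen wt (drop t s).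
Proof.
elim: s t => [|x s IH] [|t] ts //; first by rewrite /= take0 add0r.
case: s IH ts => [|y s] IH ts //.
rewrite [take _ _]/= [drop _ _]/= -/(take t.+1 (y :: s)) !wlen_cons2 (IH t) //.
by rewrite addrA.
Qed.

Lemma wlen_cat x p q : wlen wt (x :: p ++ q) = wlen wt (x :: p) + wlen wt (last x p :: q).
Proof.
elim: p x => [|y p IH] x; first by rewrite /= add0r.
by rewrite cat_cons !wlen_cons2 IH addrA.
Qed.

Lemma wlen_glue F X x y z p q : walk F X x y p -> walk F X y z q ->
  wlen wt (p ++ behead q) = wlen wt p + wlen wt q.
Proof.
case: p => [|x0 p] //; case: q => [|y0 q] // [_ py _ _] [-> _ _ _].
by rewrite cat_cons wlen_cat py.
Qed.

Lemma wlen_rev : (forall a b, wt a b = wt b a) -> forall s, wlen wt (rev s) = wlen wt s.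
Proof.
move=> wt_sym; elim=> [|x [|y s] IH] //.
rewrite rev_cons -cats1; case E: (rev (y :: s)) => [|z r].
  by move/eqP: E; rewrite -size_eq0 size_rev.
have lz : last z r = y by rewrite -[last z r]/(last x (z :: r)) -E rev_cons last_rcons.
by rewrite cat_cons wlen_cat -E IH lz wlen_cons2 /= addr0 wt_sym addrC.
Qed.

Lemma wlen_piece s a b : (a <= b < size s)%N ->
  wlen wt (piece s a b) = wlen wt (take b.+1 s) - wlen wt (take a.+1 s).
Proof.
move=> /andP [ab bs].
rewrite /piece (@wlen_split (take b.+1 s) a) ?size_takel // take_takel // take_drop.
have -> : ((b - a).+1 + a = b.+1)%N by lia.
by rewrite addrC addKr.
Qed.

Lemma wlen_split3 s a b : (a <= b < size s)%N ->
  wlen wt s =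
    wlen wt (piece s 0%N a) + wlen wt (piece s a b) + wlen wt (piece s b (size s).-1).
Proof.
move=> abs; rewrite piece_prefix piece_suffix; last by lia.
rewrite (@wlen_split s a) -?addrA; last by lia.
rewrite (@wlen_split (drop a s) (b - a)) ?size_drop; last by lia.
by rewrite drop_drop subnK; last by lia.
Qed.

Lemma walk_split_at F X x y p z : walk F X x y p -> z \in p ->
  exists p1 p2, [/\ walk F X x z p1, walk F X z y p2 & wlen wt p = wlen wt p1 + wlen wt p2].
Proof.
move=> w zp; have kp : (index z p < size p)%N by rewrite index_mem.
have /walkE [p0 px py _ _] := w.
exists (piece p 0%N (index z p)), (piece p (index z p) (size p).-1); split.
- have := walk_piece w (a := 0%N) (b := index z p); rewrite nth0 nth_index // px; apply; lia.
- have := walk_piece w (a := index z p) (b := (size p).-1).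
  by rewrite nth_index // nth_last py; apply; lia.
- by rewrite piece_prefix piece_suffix // -wlen_split.
Qed.

Lemma wlen_traject f x n :
  wlen wt (traject f x n.+1) = \sum_(m < n) wt (iter m f x) (iter m.+1 f x).
Proof.
elim: n x => [|n IH] x; first by rewrite big_ord0.
rewrite big_ord_recl trajectS [traject _ _ n.+1]trajectS wlen_cons2 -trajectS IH.
by congr (_ + _); apply: eq_bigr => i _; rewrite -!iterSr.
Qed.

Lemma detour F X a b w f Q q : symmetric F -> (forall x y, wt x y = wt y x) ->
  walk F X a b Q -> walk F X a b q -> w \in Q -> f \in q ->
  exists2 rho, walk F X w f rho & 2 * wlen wt rho <= wlen wt Q + wlen wt q.
Proof.
move=> Fsym wt_sym wQ wq wQw fq.
have [Q1 [Q2 [wQ1 wQ2 EQ]]] := walk_split_at wQ wQw.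
have [q1 [q2 [wq1 wq2 Eq]]] := walk_split_at wq fq.
have w1 := walk_glue (walk_rev Fsym wQ1) wq1.
have w2 := walk_glue wQ2 (walk_rev Fsym wq2).
have := wlen_glue (walk_rev Fsym wQ1) wq1; have := wlen_glue wQ2 (walk_rev Fsym wq2).
rewrite !(wlen_rev wt_sym) => E2 E1.
have [le12|/ltW le21] := lerP (wlen wt (rev Q1 ++ behead q1)) (wlen wt (Q2 ++ behead (rev q2))).
  by exists (rev Q1 ++ behead q1) => //; lra.
by exists (Q2 ++ behead (rev q2)) => //; lra.
Qed.

End Walks.

Fixpoint seqs_upto (T : finType) (n : nat) : seq (seq T) :=
  if n is n'.+1 then [::] :: [seq x :: t | x <- enum T, t <- seqs_upto T n'] else [:: [::]].

Lemma mem_seqs_upto (T : finType) n (s : seq T) : (size s <= n)%N -> s \in seqs_upto T n.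
Proof.
elim: n s => [|n IH] [|x s] //= sn; rewrite inE; apply/orP; right.
by apply: (allpairs_f (fun x t => x :: t)); [rewrite mem_enum | exact: IH].
Qed.

Lemma seq_argmin (T : eqType) d (O : orderType d) (P : T -> Prop) (f : T -> O) (l : seq T) :
  (exists2 x, x \in l & P x) ->
  exists x, [/\ x \in l, P x & forall y, y \in l -> P y -> (f x <= f y)%O].
Proof.
elim: l => [[x //]|a l IH] [x xl Px].
have [[y yl Py]|none] := pselect (exists2 y : T, y \in l & P y); last first.
  have xa : x = a by move: xl; rewrite inE => /orP [/eqP //|xl]; case: none; exists x.
  exists a; split; rewrite ?mem_head -?xa // => y; rewrite inE => /orP [/eqP -> //|yl] Py.
  by case: none; exists y.
have [m [ml Pm m_min]] := IH (ex_intro2 _ _ y yl Py).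
have [[Pa am]|] := pselect (P a /\ (f a <= f m)%O).
  exists a; split; rewrite ?mem_head // => z; rewrite inE => /orP [/eqP -> //|zl] Pz.
  exact: le_trans am (m_min z zl Pz).
move=> not_a; exists m; split; rewrite ?inE ?ml ?orbT // => z.
rewrite inE => /orP [/eqP -> Pa|zl]; last exact: m_min.
by rewrite leNgt; apply/negP => /ltW ?; apply: not_a.
Qed.

Section ShortestPaths.
Variables (R : realType) (V : finType) (e : rel V) (wt : V -> V -> R).
Implicit Types (X : {set V}) (p q s : seq V).

Lemma sp_piece X x y s z a b : is_sp wt e X x y s -> (a <= b < size s)%N ->
  is_sp wt e X (nth z s a) (nth z s b) (piece s a b).
Proof.
move=> [ws s_min] abs; rewrite !(set_nth_default x z); try lia.
split; first exact: walk_piece ws abs.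
move=> q wq.
have /walkE [_ sx sy _ _] := ws.
have wpre : walk e X x (nth x s a) (piece s 0%N a).
  by have := walk_piece ws (a := 0%N) (b := a); rewrite nth0 sx; apply; lia.
have wsuf : walk e X (nth x s b) y (piece s b (size s).-1).
  by have := walk_piece ws (a := b) (b := (size s).-1); rewrite nth_last sy; apply; lia.
have := s_min _ (walk_glue (walk_glue wpre wq) wsuf).
rewrite (wlen_glue wt (walk_glue wpre wq) wsuf) (wlen_glue wt wpre wq) (wlen_split3 wt abs).
lra.
Qed.

Hypothesis wt_ge1 : forall x y, e x y -> 1 <= wt x y.

Lemma path_wlen_ge x t : path e x t -> (size t)%:R <= wlen wt (x :: t).
Proof.
elim: t x => [|y t IH] x //= /andP [xy yt].
rewrite -/(wlen wt (y :: t)) -addn1 natrD addrC.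
by apply: lerD; [exact: wt_ge1 | exact: IH].
Qed.

Lemma walk_wlen_ge X x y p : walk e X x y p -> (size p)%:R - 1 <= wlen wt p.
Proof.
case: p => [|z t] // [_ _ zt _]; have := path_wlen_ge zt.
by rewrite -[size (z :: t)]/((size t).+1) -addn1 natrD; lra.
Qed.

Lemma walk_wlen_ge0 X x y p : walk e X x y p -> 0 <= wlen wt p.
Proof.
move=> w; apply: le_trans (walk_wlen_ge w); rewrite subr_ge0 ler1n lt0n size_eq0.
by case/walkE: w.
Qed.

Lemma sp_nth_neq_head X x y s z t : is_sp wt e X x y s -> (0 < t < size s)%N ->
  nth z s t != x.
Proof.
move=> [ws s_min] /andP [t0 ts]; apply/eqP => stx.
have /walkE [_ _ sy _ _] := ws.
have wsuf : walk e X x y (drop t s).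
  rewrite -piece_suffix //; have := walk_piece ws (a := t) (b := (size s).-1).
  by rewrite (set_nth_default z x) // stx nth_last sy; apply; lia.
have pre : (0 <= t < size s)%N by lia.
have := walk_wlen_ge (walk_piece ws pre); rewrite size_piece // subn0 piece_prefix.
have : (2%:R : R) <= t.+1%:R by rewrite ler_nat; lia.
by have := s_min _ wsuf; rewrite (wlen_split wt ts); lra.
Qed.

Lemma sp_nth_neq_last X x y s z t : is_sp wt e X x y s -> (t < (size s).-1)%N ->
  nth z s t != y.
Proof.
move=> [ws s_min] ts; apply/eqP => sty.
have /walkE [_ sx _ _ _] := ws.
have wpre : walk e X x y (take t.+1 s).
  rewrite -piece_prefix; have := walk_piece ws (a := 0%N) (b := t).
  by rewrite nth0 sx (set_nth_default z x) ?sty; [apply | ]; lia.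
have suf : (t <= (size s).-1 < size s)%N by lia.
have := walk_wlen_ge (walk_piece ws suf); rewrite size_piece // piece_suffix; last by lia.
have : (2%:R : R) <= ((size s).-1 - t).+1%:R by rewrite ler_nat; lia.
by have := s_min _ wpre; rewrite (@wlen_split _ _ wt s t); [lra | lia].
Qed.

Lemma exists_dist X x y p : walk e X x y p ->
  exists2 d, is_dist e wt X x y d & d <= wlen wt p.
Proof.
(* Walks no longer than [p] have boundedly many vertices, so a shortest one is found
   among finitely many sequences. *)
move=> wp; pose N := Num.Def.archi_bound (wlen wt p).
have short q : walk e X x y q -> wlen wt q <= wlen wt p -> q \in seqs_upto V N.
  move=> wq qp; apply: mem_seqs_upto; rewrite -ltnS -(ltr_nat R) -natr1.
  by have := archi_boundP (walk_wlen_ge0 wp); have := walk_wlen_ge wq; lra.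
have [m [_ wm m_min]] :=
  seq_argmin (P := walk e X x y) (wlen wt) (ex_intro2 _ _ p (short _ wp (lexx _)) wp).
have mp := m_min _ (short _ wp (lexx _)) wp.
exists (wlen wt m) => //; split=> [|q wq]; first by exists m.
have [qp|/ltW pq] := lerP (wlen wt q) (wlen wt p); first exact: m_min _ (short _ wq qp) wq.
exact: le_trans mp pq.
Qed.

Lemma wlen_piece_le X x y s a b : walk e X x y s -> (a <= b < size s)%N ->
  0 <= wlen wt (piece s a b) <= wlen wt s.
Proof.
move=> ws abs; rewrite (wlen_split3 wt abs).
have w1 := walk_wlen_ge0 (walk_piece ws (a := 0%N) (b := a) ltac:(lia)).
have w2 := walk_wlen_ge0 (walk_piece ws abs).
have w3 := walk_wlen_ge0 (walk_piece ws (a := b) (b := (size s).-1) ltac:(lia)).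
by apply/andP; split; lra.
Qed.

Lemma walk_between X x y s a b : symmetric e -> (forall u v, wt u v = wt v u) ->
  walk e X x y s -> a \in s -> b \in s ->
  exists2 p, walk e X a b p & wlen wt p <= wlen wt s.
Proof.
move=> e_sym wt_sym ws; rewrite -!index_mem => ia ib.
have [le|/ltnW le] := leqP (index a s) (index b s).
  have iab : (index a s <= index b s < size s)%N by rewrite le ib.
  exists (piece s (index a s) (index b s)); last by case/andP: (wlen_piece_le ws iab).
  by have := walk_piece ws iab; rewrite !nth_index -?index_mem.
have iba : (index b s <= index a s < size s)%N by rewrite le ia.
exists (rev (piece s (index b s) (index a s))).
  by apply: walk_rev => //; have := walk_piece ws iba; rewrite !nth_index -?index_mem.
by rewrite (wlen_rev wt_sym); case/andP: (wlen_piece_le ws iba).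
Qed.

End ShortestPaths.

Section RootedTree.
Variables (R : realType) (V : finType) (e : rel V) (wt : V -> V -> R).
Variables (Rm : {set V}) (r : V) (T : rtree V).
Hypothesis T_valid : valid_tree e Rm r T.
Local Notation par := (tpar T).

Lemma troot_valid : troot T = r. Proof. by case: T_valid => [[]]. Qed.
Lemma root_in_tree : r \in tverts T. Proof. by case: T_valid => [[]]. Qed.

Lemma iter_par_root m : iter m par r = r.
Proof. by case: T_valid => -[_ _ pr _] _; elim: m => //= m ->. Qed.

Lemma par_edge x : x \in tverts T -> x != r -> par x \in tverts T /\ e x (par x).
Proof. by case: T_valid => _ [step _]; apply: step. Qed.

Lemma iter_par_in x m : x \in tverts T -> iter m par x \in tverts T.
Proof.
move=> xT; elim: m => //= m IH.
have [->|ne] := eqVneq (iter m par x) r.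
  by rewrite -[par r]/(iter 1 par r) iter_par_root root_in_tree.
by case: (par_edge IH ne).
Qed.

Definition is_height x h := [/\ (h < #|V|)%N, iter h par x = r &
  forall m, (m < h)%N -> iter m par x != r].

Lemma exists_height x : x \in tverts T -> exists h, is_height x h.
Proof.
case: T_valid => _ [_ reach] /reach [m xm].
case/ex_minnP: (ex_intro (fun m => iter m par x == r) m (introT eqP xm)) => h /eqP xh h_min.
have below m' : (m' < h)%N -> iter m' par x != r.
  by move=> lt; apply/negP => /h_min; rewrite leqNgt lt.
exists h; split=> //.
have : uniq (traject par x h.+1).
  rewrite looping_uniq; apply/trajectP => -[i ih]; rewrite xh => /esym/eqP.
  exact/negP/below.
by move/card_uniqP; rewrite size_traject => <-; apply: max_card.
Qed.

Lemma is_height_lt x h m : is_height x h -> (iter m par x != r) = (m < h)%N.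
Proof.
move=> [_ xh below]; have [lt|ge] := ltnP m h; first exact: below.
by rewrite -(subnK ge) iterD xh iter_par_root eqxx.
Qed.

Lemma is_height_iter x h n : is_height x h -> (n <= h)%N -> is_height (iter n par x) (h - n).
Proof.
move=> hx nh; have [hV xh _] := hx; split; first by lia.
  by rewrite -iterD subnK.
by move=> m mh; rewrite -iterD (is_height_lt _ hx); lia.
Qed.

Lemma dep_traject x h : is_height x h -> dep wt T x = wlen wt (traject par x h.+1).
Proof.
move=> hx; have [hV _ _] := hx.
rewrite /dep wlen_traject troot_valid.
rewrite (big_ord_widen _ (fun m => wt (iter m par x) (iter m.+1 par x)) (ltnW hV)).
rewrite [RHS]big_mkcond /=.
by apply: eq_bigr => i _; rewrite (is_height_lt _ hx).
Qed.

Lemma walk_up (X : {set V}) x n : x \in tverts T -> (forall m, (m < n)%N -> iter m par x != r) ->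
  (forall m, (m <= n)%N -> iter m par x \in X) ->
  walk e X x (iter n par x) (traject par x n.+1).
Proof.
move=> xT below inX; apply/walkE; split.
- by rewrite -size_eq0 size_traject.
- by rewrite trajectS.
- by rewrite trajectS /= last_traject.
- apply/(sortedP x) => i; rewrite size_traject ltnS => lt.
  rewrite !nth_traject //; last by rewrite ltnS ltnW.
  by have [] := par_edge (iter_par_in i xT) (below i lt).
- by move=> y /trajectP [m mn ->]; apply: inX.
Qed.

Lemma dep_split x h n : is_height x h -> (n <= h)%N ->
  dep wt T x = wlen wt (traject par x n.+1) + dep wt T (iter n par x).
Proof.
move=> hx nh; have [hV _ _] := hx.
have E : traject par x h.+1 = traject par x n ++ traject par (iter n par x) (h - n).+1.
  by rewrite -trajectD; congr traject; lia.
rewrite (dep_traject hx) (dep_traject (is_height_iter hx nh)).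
rewrite (@wlen_split _ _ wt _ n) ?size_traject ?ltnS // take_traject ?ltnS //.
by rewrite E drop_size_cat ?size_traject.
Qed.

Lemma ancestor_child_in_NT (S : {set V}) w h s : r \in S -> w \in S -> w \in tverts T ->
  is_height w h -> (s < h)%N -> iter s par w \in NT S T (iter s.+1 par w).
Proof.
(* [iter s par w] lies on the tree path from [w] to the root, both of which are in [S]. *)
move=> rS wS wT hw sh; have yT := iter_par_in s wT.
apply/setUP; right; rewrite inE yT troot_valid (is_height_lt _ hw) sh iterS eqxx /=.
rewrite /trunk yT; apply/existsP; exists w; apply/existsP; exists r.
rewrite wS rS wT root_in_tree /=; apply/andP; split.
  apply/orP; left; apply/existsP; have [hV _ _] := hw.
  by exists (Ordinal (ltn_trans sh hV)); rewrite eqxx.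
apply/forallP => c; apply/implyP => /andP [_ /existsP [m /eqP]].
rewrite iter_par_root => <-; have [hy [hyV yr _]] := exists_height yT.
by apply/existsP; exists (Ordinal hyV); rewrite yr.
Qed.

Lemma parent_in_NT (S : {set V}) f : f != r -> par f \in NT S T f.
Proof. by move=> fr; apply/setUP; left; rewrite inE troot_valid fr eqxx. Qed.

Hypothesis wt_ge1 : forall x y, e x y -> 1 <= wt x y.

Lemma dep_ge0 x : x \in tverts T -> 0 <= dep wt T x.
Proof.
move=> xT; have [h hx] := exists_height xT; have [_ xh _] := hx.
rewrite (dep_traject hx); apply: (walk_wlen_ge0 wt_ge1 (X := tverts T) (x := x) (y := r)).
rewrite -xh; apply: walk_up => // m mh; [by rewrite (is_height_lt _ hx) | exact: iter_par_in].
Qed.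

Lemma dep_split_le x h n : x \in tverts T -> is_height x h -> (n <= h)%N ->
  wlen wt (traject par x n.+1) <= dep wt T x /\ dep wt T (iter n par x) <= dep wt T x.
Proof.
move=> xT hx nh; rewrite (dep_split hx nh).
have := dep_ge0 (iter_par_in n xT).
have : 0 <= wlen wt (traject par x n.+1).
  apply: (walk_wlen_ge0 wt_ge1 (X := tverts T) (x := x) (y := iter n par x)).
  apply: walk_up => // m mn; [rewrite (is_height_lt _ hx); lia | exact: iter_par_in].
by split; lra.
Qed.

Variable D : {set V}.

Lemma exit_at_ancestor (S : {set V}) w h : r \in S -> w \in S -> w \in tverts T ->
  w \notin D -> is_height w h -> (exists m, (m <= h)%N && (iter m par w \in D)) ->
  exists y f, [/\ f \in D, f \in tverts T, y \in NT S T f &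
    exists2 p, walk e (~: D) w y p & wlen wt p <= dep wt T w].
Proof.
move=> rS wS wT wD hw /ex_minnP [[|s] /andP [sh sD] s_min].
  by rewrite /= (negbTE wD) in sD.
exists (iter s par w), (iter s.+1 par w); split=> //; first exact: iter_par_in.
  exact: ancestor_child_in_NT hw sh.
exists (traject par w s.+1); last by case: (dep_split_le wT hw (ltnW sh)).
apply: walk_up => // m ms; first by rewrite (is_height_lt _ hw); lia.
by rewrite inE; apply/negP => mD; have := s_min m; rewrite mD andbT => /(_ ltac:(lia)); lia.
Qed.

Hypothesis e_sym : symmetric e.
Hypothesis wt_sym : forall x y, wt x y = wt y x.

Lemma exit_through_root (S : {set V}) w h f : w \in tverts T -> f \in tverts T ->
  f \in D -> is_height w h -> (forall m, (m <= h)%N -> iter m par w \notin D) ->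
  exists y f', [/\ f' \in D, f' \in tverts T, y \in NT S T f' &
    exists2 p, walk e (~: D) w y p & wlen wt p <= dep wt T w + dep wt T f].
Proof.
move=> wT fT fD hw w_up; have [_ wr _] := hw.
have [hf hff] := exists_height fT; have [_ fr _] := hff.
(* Climb from [f] to the topmost fault [f'] below the root; its parent is reached from
   [w] through the root without meeting [D]. *)
pose inD m := (m <= hf)%N && (iter m par f \in D).
have ex0 : exists m, inD m by exists 0%N; rewrite /inD fD.
have ub m : inD m -> (m <= hf)%N by case/andP.
case: (ex_maxnP ex0 ub) => s /andP [sh sD] s_max.
have rD : r \notin D by rewrite -wr; apply: w_up.
have {}sh : (s < hf)%N.
  by rewrite ltn_neqAle sh andbT; apply/eqP => shf; move: sD; rewrite shf fr (negbTE rD).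
exists (iter s.+1 par f), (iter s par f); split=> //; first exact: iter_par_in.
  by apply: parent_in_NT; rewrite (is_height_lt _ hff).
have to_root : walk e (~: D) w r (traject par w h.+1).
  rewrite -{1}wr; apply: walk_up => // m mh; first by rewrite (is_height_lt _ hw).
  by rewrite inE w_up.
have hy := is_height_iter hff sh; have [_ yr _] := hy.
have from_y : walk e (~: D) (iter s.+1 par f) r (traject par (iter s.+1 par f) (hf - s.+1).+1).
  rewrite -{1}yr; apply: walk_up => [|m mh|m mh]; first exact: iter_par_in.
    by rewrite (is_height_lt _ hy).
  rewrite inE -iterD; apply/negP => mD; have := s_max _ (introT andP (conj _ mD)).
  by move=> /(_ ltac:(lia)); lia.
exists (traject par w h.+1 ++ behead (rev (traject par (iter s.+1 par f) (hf - s.+1).+1))).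
  exact: walk_glue to_root (walk_rev e_sym from_y).
rewrite (wlen_glue wt to_root (walk_rev e_sym from_y)) (wlen_rev wt_sym).
rewrite -(dep_traject hw) -(dep_traject hy) lerD2l.
by case: (dep_split_le fT hff sh).
Qed.

Lemma tree_exit (S : {set V}) w f : r \in S -> w \in S -> w \in tverts T ->
  f \in tverts T -> w \notin D -> f \in D ->
  exists y f', [/\ f' \in D, f' \in tverts T, y \in NT S T f' &
    exists2 p, walk e (~: D) w y p & wlen wt p <= dep wt T w + dep wt T f].
Proof.
move=> rS wS wT fT wD fD; have [h hw] := exists_height wT.
have [anc_D|no_anc_D] := pselect (exists m, (m <= h)%N && (iter m par w \in D)).
  have [y [f' [f'D f'T yN [p wp pw]]]] := exit_at_ancestor rS wS wT wD hw anc_D.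
  exists y, f'; split=> //; exists p => //.
  by have := dep_ge0 fT; lra.
apply: exit_through_root hw _ => // m mh; apply/negP => mD.
by apply: no_anc_D; exists m; rewrite mh.
Qed.

End RootedTree.

Section Levels.
Variables (V : finType) (Us : seq {set V}).
Hypothesis Us_root : nth finset.set0 Us 0%N = [set: V].

Lemma Gset_top z : z \in Gset Us (size Us).
Proof. by rewrite inE; apply/forallP => j; rewrite leqNgt ltn_ord. Qed.

Lemma Gset_notin l z : z \in Gset Us l -> z \notin nth finset.set0 Us l.
Proof.
rewrite inE => /forallP z_out; have [lt|ge] := ltnP l (size Us).
  by have := z_out (Ordinal lt); rewrite leqnn.
by rewrite nth_default // inE.
Qed.

Lemma Gset_level l z : z \in Gset Us l.+1 -> z \notin Gset Us l ->
  (l < size Us)%N /\ z \in Sj Us l.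
Proof.
move=> zl1; rewrite inE negb_forall => /existsP [j]; rewrite negb_imply negbK => /andP [lj zj].
have jl : j = l :> nat.
  apply/eqP; rewrite eqn_leq lj andbT; apply: contraLR zj; rewrite -ltnNge => lt.
  by move: zl1; rewrite inE => /forallP /(_ j); rewrite lt.
split; first by rewrite -jl ltn_ord.
by rewrite !inE -jl zj andbT jl; apply: Gset_notin.
Qed.

Lemma exists_min_level (Q : seq V) : Q != [::] ->
  exists l, [/\ (l < size Us)%N, {subset Q <= Gset Us l.+1} &
    exists2 w, w \in Q & w \in Sj Us l].
Proof.
move=> Q0; pose inG l := all (fun z => z \in Gset Us l) Q.
have [|[|l] Ql l_min] := ex_minnP (ex_intro inG (size Us) _).
- by apply/allP => z _; apply: Gset_top.
- case: Q Q0 @inG Ql {l_min} => // z Q _ /= /andP [/Gset_notin].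
  by rewrite Us_root inE.
have /allPn [w wQ wl] : ~~ inG l by apply/negP => /l_min; rewrite ltnn.
have [lt wS] := Gset_level (allP Ql w wQ) wl.
by exists l; split=> // [z /(allP Ql)|]; last exists w.
Qed.

End Levels.

Section FarVertex.
Variables (R : realType) (V : finType) (e : rel V) (wt : V -> V -> R).
Hypothesis e_sym : symmetric e.
Hypothesis wt_sym : forall x y, wt x y = wt y x.
Hypothesis wt_ge1 : forall x y, e x y -> 1 <= wt x y.
Hypothesis kk_ge1 : 1 <= kk R V.
Variable TCR : {set V} -> {set V} -> V -> rtree V.
Hypothesis TCR_cover : forall Rm S : {set V}, tree_cover e wt Rm (S :\: Rm) (TCR Rm S).
Variables (Us : seq {set V}) (D : {set V}) (s0 t0 : V).
Hypothesis Us_root : nth finset.set0 Us 0%N = [set: V].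
Local Notation VH := (VH TCR Us D s0 t0).

Lemma near_VH l w f rho : (l < size Us)%N -> w \in Sj Us l -> w \notin D -> f \in D ->
  walk e (~: nth finset.set0 Us l.+1) w f rho ->
  exists2 y, y \in VH &
    exists2 p, walk e (~: D) w y p & wlen wt p <= (2 * kk R V - 1) * wlen wt rho.
Proof.
move=> lUs wS wD fD wrho; have [_ fU] := walk_ends_in wrho.
have [_ valid covers _] := TCR_cover (nth finset.set0 Us l.+1) (nth finset.set0 Us l).
have [rt rtS [wT fT dep_le]] := covers w f wS fU (ex_intro _ rho wrho).
have [d dist d_le] := exists_dist wt_ge1 wrho.
have [y [f' [f'D f'T yN [p wp p_le]]]] :=
  tree_exit (valid rt rtS) wt_ge1 e_sym wt_sym rtS wS wT fT wD fD.
have [_ yD] := walk_ends_in wp; rewrite inE in yD.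
exists y.
  rewrite inE yD /=; apply/setUP; right; rewrite inE; apply/existsP; exists f'.
  rewrite f'D; apply/existsP; exists (Ordinal lUs); apply/existsP; exists rt.
  by rewrite rtS f'T yN.
exists p => //; apply: le_trans p_le _; apply: le_trans (dep_le d dist) _.
apply: ler_wpM2l => //; have := kk_ge1; lra.
Qed.

Lemma sp_at_min_level a b Q : is_sp wt e (~: D) a b Q ->
  ((1 < size Q)%N -> exists2 z, z \in Q & forall y p, y \in VH ->
     walk e (~: D) z y p -> 2 * kk R V * wlen wt Q < wlen wt p) ->
  exists2 l, (0 < l <= size Us)%N & is_sp wt e (Gset Us l) a b Q.
Proof.
(* A one-vertex path is shortest anyway, hence the premise [1 < size Q]. *)
move=> [wQ Q_min] far; have /walkE [Q0 _ _ _ QD] := wQ.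
have [l [lUs QG [w wQw wS]]] := exists_min_level Us_root Q0.
have wD : w \notin D by have := QD w wQw; rewrite inE.
have wQG := walk_restrict wQ QG.
exists l.+1; first by lia.
split=> // q wq; rewrite leNgt; apply/negP => qQ.
have [[f fq fD]|noD] := pselect (exists2 f, f \in q & f \in D); last first.
  have : walk e (~: D) a b q.
    by apply: walk_restrict wq _ => z zq; rewrite inE; apply/negP => zD; apply: noD; exists z.
  by move/Q_min; rewrite leNgt qQ.
have [rho wrho rho_le] := detour e_sym wt_sym wQG wq wQw fq.
have GU : {subset Gset Us l.+1 <= ~: nth finset.set0 Us l.+1}.
  by move=> z /Gset_notin; rewrite inE.
have [y yVH [p wp p_le]] := near_VH lUs wS wD fD (walk_mono GU wrho).
have q0 := walk_wlen_ge0 wt_ge1 wq.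
have sQ : (1 < size Q)%N by rewrite ltnNge; apply/negP => /(wlen_small wt); lra.
have [z zQ z_far] := far sQ.
have [p' wp' p'_le] := walk_between wt_ge1 e_sym wt_sym wQ zQ wQw.
have := z_far y _ yVH (walk_glue wp' wp); rewrite (wlen_glue wt wp' wp).
have : (2 * kk R V - 1) * wlen wt rho <= (2 * kk R V - 1) * wlen wt Q.
  by apply: ler_wpM2l; [have := kk_ge1; lra | lra].
lra.
Qed.

End FarVertex.

Lemma floor_logb_close (R : realType) (eta A B : R) : 0 < eta -> 0 < A -> 0 < B ->
  Num.floor (logb eta A) = Num.floor (logb eta B) -> B < (1 + eta) * A.
Proof.
move=> eta0 A0 B0 AB.
have c0 : 0 < ln (1 + eta) by apply: ln_gt0; lra.
have /andP [A1 _] := floor_itv (logb eta A).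
have /andP [_ B2] := floor_itv (logb eta B).
rewrite -AB intrD in B2.
have : logb eta B < logb eta A + 1 by lra.
rewrite /logb -(ltr_pM2r c0) mulrDl !divfK ?gt_eqF // mul1r.
rewrite -lnM ?posrE //; last by lra.
have pos : 0 < A * (1 + eta) by apply: mulr_gt0 => //; lra.
by rewrite ltr_ln ?posrE // mulrC.
Qed.

Section Segments.
Variables (R : realType) (V : finType) (e : rel V) (wt : V -> V -> R).
Hypothesis wt_ge1 : forall x y, e x y -> 1 <= wt x y.
Variables (X : {set V}) (x y : V) (P : seq V).
Hypothesis wP : walk e X x y P.

Lemma lenAB t : (t < size P)%N -> lenA wt P t + lenB wt P t = wlen wt P.
Proof. by move=> tP; rewrite /lenA /lenB -wlen_split. Qed.

Lemma lenA_mono t1 t2 : (t1 <= t2 < size P)%N -> lenA wt P t1 <= lenA wt P t2.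
Proof.
move=> t12; have /andP [+ _] := wlen_piece_le wt_ge1 wP t12.
by rewrite wlen_piece // /lenA subr_ge0.
Qed.

Lemma lenA_ge1 t : (0 < t < size P)%N -> 1 <= lenA wt P t.
Proof.
move=> tP; have t0P : (0 <= t < size P)%N by lia.
have := walk_wlen_ge wt_ge1 (walk_piece wP t0P); rewrite size_piece // subn0 piece_prefix.
have : (2%:R : R) <= t.+1%:R by rewrite ler_nat; lia.
by rewrite /lenA; lra.
Qed.

Lemma lenB_ge1 t : (t < (size P).-1)%N -> 1 <= lenB wt P t.
Proof.
move=> tP; have tPP : (t <= (size P).-1 < size P)%N by lia.
have := walk_wlen_ge wt_ge1 (walk_piece wP tPP); rewrite size_piece // piece_suffix; last by lia.
have : (2%:R : R) <= ((size P).-1 - t).+1%:R by rewrite ler_nat; lia.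
by rewrite /lenB; lra.
Qed.

Lemma same_seg_bound eta i j : 0 < eta -> same_seg wt eta P i j -> (i <= j)%N ->
  exists L, (forall t, (i <= t <= j)%N -> L <= Num.min (lenA wt P t) (lenB wt P t)) /\
    forall a b, (i <= a <= b)%N -> (b <= j)%N -> wlen wt (piece P a b) < eta * L.
Proof.
move=> eta0 [i0 iP j0 jP same] ij.
have jsP : (j < size P)%N := leq_trans jP (leq_pred _).
have Ai := lenA_ge1 (t := i) (introT andP (conj i0 (leq_trans iP (leq_pred _)))).
have Aj := lenA_ge1 (t := j) (introT andP (conj j0 jsP)).
have Bi := lenB_ge1 iP; have Bj := lenB_ge1 jP.
have monoA t1 t2 : (t1 <= t2)%N -> (t2 <= j)%N -> lenA wt P t1 <= lenA wt P t2.
  by move=> t12 t2j; apply: lenA_mono; rewrite t12 (leq_ltn_trans t2j jsP).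
have AB t : (t <= j)%N -> lenA wt P t + lenB wt P t = wlen wt P.
  by move=> tj; apply/lenAB/(leq_ltn_trans tj jsP).
have {}same : lenA wt P j - lenA wt P i < eta * lenA wt P i /\
                (forall t, (i <= t <= j)%N -> lenA wt P i <= Num.min (lenA wt P t) (lenB wt P t)) \/
              lenA wt P j - lenA wt P i < eta * lenB wt P j /\
                (forall t, (i <= t <= j)%N -> lenB wt P j <= Num.min (lenA wt P t) (lenB wt P t)).
  have ABi := AB i ij; have ABj := AB j (leqnn j).
  case: same => [[Ai2 [Aj2 /(floor_logb_close eta0) close]]
               | [Bi2 [Bj2 /esym/(floor_logb_close eta0) close]]].
    have := close ltac:(lra) ltac:(lra) => {}close.
    left; split; first lra.
    move=> t /andP [it tj]; have := monoA i t it tj; have := monoA t j tj (leqnn j).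
    by have := AB t tj; rewrite le_min => *; apply/andP; split; lra.
  have := close ltac:(lra) ltac:(lra) => {}close.
  right; split; first lra.
  move=> t /andP [it tj]; have := monoA i t it tj; have := monoA t j tj (leqnn j).
  by have := AB t tj; rewrite le_min => *; apply/andP; split; lra.
have pieceA a b : (i <= a <= b)%N -> (b <= j)%N ->
    wlen wt (piece P a b) <= lenA wt P j - lenA wt P i.
  move=> /andP [ia ab] bj; rewrite wlen_piece; last by rewrite ab (leq_ltn_trans bj jsP).
  have := monoA i a ia (leq_trans ab bj); have := monoA b j bj (leqnn j).
  by rewrite /lenA; lra.
case: same => [[close L_le]|[close L_le]]; [exists (lenA wt P i) | exists (lenB wt P j)];
  by split=> // a b ab bj; have := pieceA a b ab bj; lra.
Qed.

Lemma far_away_walk eta (Y D : {set V}) z t w p : far_away e wt eta Y D P ->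
  (0 < t < (size P).-1)%N -> nth z P t != nth z P 0%N -> nth z P t != last z P ->
  w \in Y -> walk e (~: D) (nth z P t) w p ->
  eta * Num.min (lenA wt P t) (lenB wt P t) < wlen wt p.
Proof.
move=> far /andP [t0 tP] t_head t_last wY wp.
have [d dist d_le] := exists_dist wt_ge1 wp.
rewrite ltNge; apply/negP => le; apply: (far z t t0 tP t_head t_last w wY).
by exists d; split=> //; apply: le_trans d_le le.
Qed.

End Segments.

Section Concatenation.
Variables (R : realType) (V : finType) (e : rel V) (wt : V -> V -> R).
Variables (X : {set V}) (u v x : V) (p1 p2 : seq V).
Hypotheses (sp1 : is_sp wt e X u v p1) (sp2 : is_sp wt e X v x p2).
Local Notation P := (p1 ++ behead p2).
Local Notation n1 := (size p1).-1.

Let p1_gt0 : (0 < size p1)%N := walk_size_gt0 sp1.1.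

Lemma concat_walk : walk e X u x P.
Proof. by case: sp1 sp2 => [w1 _] [w2 _]; apply: walk_glue w1 w2. Qed.

Lemma concat_take : P = take n1 p1 ++ p2.
Proof.
case: sp1 sp2 => [/walkE [p10 _ p1v _ _] _] [/walkE [p20 p2v _ _ _] _].
case/lastP: p1 p10 p1v => [//|s z] _; rewrite last_rcons => ->.
by case: p2 p20 p2v => [//|y t] _ /= ->; rewrite size_rcons -cats1 take_size_cat // -catA.
Qed.

Lemma size_concat : size P = (n1 + size p2)%N.
Proof. by rewrite concat_take size_cat size_takel // leq_pred. Qed.

Lemma nth_concat_l z t : (t <= n1)%N -> nth z P t = nth z p1 t.
Proof.
by move=> tn; rewrite nth_cat ifT //; lia.
Qed.

Lemma nth_concat_r z t : (n1 <= t)%N -> nth z P t = nth z p2 (t - n1).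
Proof. by move=> nt; rewrite concat_take nth_cat size_takel ?leq_pred // ltnNge nt. Qed.

Lemma concat_piece_sp z a b : (a <= b < size P)%N -> (b <= n1)%N \/ (n1 <= a)%N ->
  is_sp wt e X (nth z P a) (nth z P b) (piece P a b).
Proof.
move=> abP [bn|na].
  by rewrite !nth_concat_l ?piece_cat_l; [apply: sp_piece sp1 _ | ..]; lia.
rewrite !nth_concat_r ?concat_take ?piece_cat_r ?size_takel ?leq_pred; try lia.
apply: sp_piece sp2 _; move: abP; rewrite size_concat; lia.
Qed.

Hypothesis wt_ge1 : forall x y, e x y -> 1 <= wt x y.
Hypothesis e_irr : irreflexive e.

Lemma concat_inner_vertex z a b : (0 < a)%N -> (a < b)%N -> (b < (size P).-1)%N ->
  exists t, [/\ (a <= t <= b)%N, nth z P t != u & nth z P t != x].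
Proof.
(* Inner vertices of [p1] differ from [u] and those of [p2] from [x]; of two
   consecutive, hence distinct, positions one also avoids the other endpoint. *)
move=> a0 ab bP.
have neq_u t : (0 < t <= n1)%N -> nth z P t != u.
  move=> tn; rewrite nth_concat_l; last by lia.
  by apply: (sp_nth_neq_head wt_ge1 _ sp1); lia.
have neq_x t : (n1 <= t < (size P).-1)%N -> nth z P t != x.
  move=> tn; rewrite nth_concat_r; last by lia.
  by apply: (sp_nth_neq_last wt_ge1 _ sp2); move: tn; rewrite size_concat; lia.
have step : nth z P a != nth z P a.+1.
  have /walkE [_ _ _ /(sortedP z) Fs _] := concat_walk.
  by apply: contraTneq (Fs a ltac:(lia)) => ->; rewrite e_irr.
have [an|na] := leqP a.+1 n1.
  have [ax|ax] := eqVneq (nth z P a) x.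
    by exists a.+1; split; [lia | apply: neq_u; lia | rewrite -ax eq_sym].
  by exists a; split; [lia | apply: neq_u; lia | ].
have [au|au] := eqVneq (nth z P a) u.
  by exists a.+1; split; [lia | rewrite -au eq_sym | apply: neq_x; lia].
by exists a; split; [lia | | apply: neq_x; lia].
Qed.

End Concatenation.

Lemma expR1_le3 (R : realType) : expR 1 <= 3 :> R.
Proof.
(* e = (e^(1/6))^6, e^(1/6) <= 6/5 because e^(-1/6) >= 5/6, and (6/5)^6 < 3. *)
pose y : R := expR 6^-1.
have y_le : y <= 6 / 5.
  have := expR_ge1Dx (- 6^-1 : R); have := expRxMexpNx_1 (6^-1 : R).
  have := expR_gt0 (6^-1 : R); rewrite -/y; have -> : (6^-1 : R) = 1 / 6 by rewrite div1r.
  by nra.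
have y0 : 0 <= y by apply/ltW/expR_gt0.
have -> : (1 : R) = 6%:R * 6^-1 by rewrite mulfV.
rewrite expRM_natl -/y.
have y3 : y ^+ 3 <= 216 / 125 by rewrite !exprS expr0 mulr1; nra.
have -> : y ^+ 6 = y ^+ 3 * y ^+ 3 by rewrite -exprD.
by have := exprn_ge0 3 y0; nra.
Qed.

Lemma kk_ge1 (R : realType) (V : finType) : (3 <= #|V|)%N -> 1 <= kk R V.
Proof.
move=> V3; have V3R : (3 : R) <= (#|V|)%:R by rewrite (ler_nat R 3).
rewrite /kk /nV -[X in X <= _](expRK 1) ler_ln ?posrE ?expR_gt0 //; last by lra.
exact: le_trans (expR1_le3 R) V3R.
Qed.

Section SegmentPieces.
Variables (R : realType) (V : finType) (e : rel V) (wt : V -> V -> R).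
Hypotheses (e_sym : symmetric e) (e_irr : irreflexive e).
Hypothesis wt_sym : forall x y, wt x y = wt y x.
Hypothesis wt_ge1 : forall x y, e x y -> 1 <= wt x y.
Hypothesis kk_ge1 : 1 <= kk R V.
Variable TCR : {set V} -> {set V} -> V -> rtree V.
Hypothesis TCR_cover : forall Rm S : {set V}, tree_cover e wt Rm (S :\: Rm) (TCR Rm S).
Variables (Us : seq {set V}) (D : {set V}) (s0 t0 : V).
Hypothesis Us_root : nth finset.set0 Us 0%N = [set: V].
Variables (eta1 eta5 : R).
Hypothesis eta5_gt0 : 0 < eta5.
Hypothesis eta15 : (4 * kk R V - 2) * eta5 = eta1.
Variables (u v x : V) (p1 p2 : seq V).
Hypotheses (sp1 : is_sp wt e (~: D) u v p1) (sp2 : is_sp wt e (~: D) v x p2).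
Local Notation P := (p1 ++ behead p2).
Hypothesis far : far_away e wt eta1 (VH TCR Us D s0 t0) D P.

Lemma segment_piece_sp z i j a b : same_seg wt eta5 P i j -> (i <= a <= b)%N -> (b <= j)%N ->
  (b <= (size p1).-1)%N \/ ((size p1).-1 <= a)%N ->
  exists2 l, (0 < l <= size Us)%N & is_sp wt e (Gset Us l) (nth z P a) (nth z P b) (piece P a b).
Proof.
move=> seg ab bj side; have [i0 iP _ jP _] := seg.
have bP : (b < (size P).-1)%N := leq_ltn_trans bj jP.
have abP : (a <= b < size P)%N by rewrite (andP ab).2 (leq_trans bP (leq_pred _)).
have wP := concat_walk sp1 sp2.
have [L [L_le L_piece]] := same_seg_bound wt_ge1 wP eta5_gt0 seg ltac:(lia).
apply: (sp_at_min_level e_sym wt_sym wt_ge1 kk_ge1 TCR_cover (s0 := s0) (t0 := t0) Us_root).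
  exact: (concat_piece_sp sp1 sp2) abP side.
rewrite size_piece // => a_lt_b.
have [t [/andP [a_t t_b] tu tx]] :=
  concat_inner_vertex sp1 sp2 wt_ge1 e_irr z (a := a) (b := b) ltac:(lia) ltac:(lia) bP.
have tP : (0 < t < (size P).-1)%N by rewrite (leq_ltn_trans t_b bP) andbT; lia.
exists (nth z P t).
  rewrite -(subnKC a_t) -(nth_piece _ _ (b := b)); last by lia.
  by apply: mem_nth; rewrite size_piece //; lia.
move=> y p yVH wp; have k1 := kk_ge1; have e5 := eta5_gt0.
have /walkE [P0 Pu Px _ _] := wP.
have Pz0 : nth z P 0%N = u by rewrite nth0; move: P0 Pu; case: (P).
have Pzl : last z P = x by move: P0 Px; case: (P).
have := far_away_walk wt_ge1 far (z := z) tP ltac:(by rewrite Pz0) ltac:(by rewrite Pzl) yVH wp.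
have /andP [Q0 _] := wlen_piece_le wt_ge1 wP abP.
have c1 : 2 * kk R V * wlen wt (piece P a b) <= (4 * kk R V - 2) * wlen wt (piece P a b).
  by rewrite -subr_ge0 -mulrBl; apply: mulr_ge0 => //; lra.
have c2 : (4 * kk R V - 2) * wlen wt (piece P a b) <= eta1 * L.
  by rewrite -eta15 -mulrA; apply: ler_wpM2l; [lra | exact/ltW/L_piece].
have c3 : eta1 * L <= eta1 * Num.min (lenA wt P t) (lenB wt P t).
  apply: ler_wpM2l; first by rewrite -eta15; apply: mulr_ge0; lra.
  by apply: L_le; rewrite (leq_trans (andP ab).1 a_t) (leq_trans t_b bj).
lra.
Qed.

End SegmentPieces.

Theorem theorem4p9
  (R : realType) (V : finType) (e : rel V) (wt : V -> V -> R) (W : R)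
  (Hn : (3 <= #|V|)%N)
  (He_sym : symmetric e) (He_irr : irreflexive e)
  (Hw_sym : forall x y, wt x y = wt y x)
  (Hw : forall x y, e x y -> 1 <= wt x y <= W)
  (Huniq : forall (X : {set V}) (F : rel V), symmetric F -> subrel F e ->
     forall x y p q, is_sp wt F X x y p -> is_sp wt F X x y q -> p = q)
  (d : nat) (Hd : (2 <= d)%N) (c : R) (Hc : 1 <= c)
  (TCR : {set V} -> {set V} -> V -> rtree V)
  (HTC : forall Rm S : {set V}, tree_cover e wt Rm (S :\: Rm) (TCR Rm S))
  (D : {set V}) (HD : (#|D| <= d)%N)
  (Us : seq {set V}) (HUs : hier_path (s_par V d c) d TCR Us)
  (HDdeg : forall f, f \in D -> forall j, (j < size Us)%N ->
     forall r, r \in Sj Us j ->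
       ((pdeg (Sj Us j) (Tj TCR Us j r) f)%:R <= s_par V d c :> R))
  (s0 t0 : V) (Hs0 : s0 \notin D) (Ht0 : t0 \notin D)
  (eps : R) (Heps : 0 < eps)
  (u v x : V) (Hu : u \notin D) (Hv : v \notin D) (Hx : x \notin D)
  (p1 p2 : seq V)
  (Hp1 : is_sp wt e (~: D) u v p1) (Hp2 : is_sp wt e (~: D) v x p2) :
  let eps1 := eps / (2 + eps) in
  let eps5 := eps1 / (4 * kk R V - 2) in
  let P := p1 ++ behead p2 in
  far_away e wt eps1 (VH TCR Us D s0 t0) D P ->
  seg_bipath e wt eps5 Us P.
Proof.
move=> eps1 eps5 P far z i j seg seg_max.
have wt_ge1 a b : e a b -> 1 <= wt a b by move/Hw/andP => [].
have k1 := kk_ge1 R Hn; have [_ Us_root _] := HUs.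
have eps5_gt0 : 0 < eps5 by apply: divr_gt0; [apply: divr_gt0 | ]; lra.
have eps15 : (4 * kk R V - 2) * eps5 = eps1 by rewrite mulrC divfK // gt_eqF //; lra.
have piece_sp a b := segment_piece_sp He_sym He_irr Hw_sym wt_ge1 k1 HTC Us_root
  eps5_gt0 eps15 Hp1 Hp2 far z (a := a) (b := b) seg.
have ij : (i <= j)%N by case/andP: (seg_max j seg).
(* the junction of [p1] and [p2], clamped into the segment *)
pose m := maxn i (minn (size p1).-1 j).
have imj : (i <= m <= j)%N by rewrite /m; clear -ij; lia.
have [l1 l1U sp_im] := piece_sp i m (introT andP (conj (leqnn i) (andP imj).1)) (andP imj).2
  ltac:(rewrite /m; clear; lia).
have [l2 l2U sp_mj] := piece_sp m j imj (leqnn j) ltac:(rewrite /m; clear; lia).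
exists l1, l2, m; split=> //.
by exists (piece P i m), (piece P m j); split=> //; apply: piece_cat.
Qed.
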